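(* Let $K_1,\dots,K_m\subset\mathbb{R}^n$ be closed sets, all super-regular at $x^*\in K:=\bigcap_{l=1}^mK_l$, and suppose the local metric inequality holds at $x^*$: there are $\beta\ge1$ and a neighborhood $V_1$ of $x^*$ with $d(x,K)\le\beta\max_{1\le l\le m}d(x,K_l)$ for all $x\in V_1$. Let $$\rho:=\frac{\sqrt{\beta^2-(1-\tau)^2}}{\beta},\qquad L:=\frac{\beta}{1-\rho}.$$ Then for any $\tau\in(0,1)$ there is a neighborhood $U$ of $x^*$ such that for any $x_0\in U$ and any positive integer $\bar p$, the local super-regular SHQP algorithm (described in the context) with $\tau_i=\tau$ for all $i$ generates a sequence $\{x_i\}$ converging to some $\bar x\in K\cap V_1$ with $$\|x_{i+1}-\bar x\|\le\|x_i-\bar x\|\ \text{ and }\ \|x_i-\bar x\|\le L\max_{l\in\{1,\dots,m\}}d(x_i,K_l)\quad\text{for all }i\ge0.$$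
   Context: For a closed set $C\subset\mathbb{R}^n$ and $\bar x\in C$, the regular normal cone is $\hat N_C(\bar x)=\{y:\langle y,x-\bar x\rangle\le o(\|x-\bar x\|)\text{ for all }x\in C\}$ and the limiting normal cone $N_C(\bar x)$ is the set of $y$ for which there exist $x_i\to\bar x$ with $x_i\in C$ and $y_i\in\hat N_C(x_i)$ with $y_i\to y$. $C$ is super-regular at $\bar x\in C$ if for every $\delta>0$ there is a neighborhood $V$ of $\bar x$ such that $\langle z-y,v\rangle\le\delta\|z-y\|\|v\|$ for all $z,y\in C\cap V$ and $v\in N_C(y)$. $P_C(x)$ denotes the set of nearest points of $C$ to $x$. Local super-regular SHQP algorithm (parameters: a positive integer $\bar p$ and numbers $\tau_i\in[0,1)$): starting from $x_0$, for $i=1,2,\dots$: choose $\bar j_i\in\arg\max_j d(x_{i-1},K_j)$; pick $x_i^{(\bar j_i)}\in P_{K_{\bar j_i}}(x_{i-1})$; set $a_i=x_{i-1}-x_i^{(\bar j_i)}$ and $b_i=\langle a_i,(1-\tau_i)x_i^{(\bar j_i)}+\tau_ix_{i-1}\rangle$; let $\tilde F_i=\{x:\langle a_l,x\rangle\le b_l\text{ for }\max(1,i-\bar p)\le l\le i\}$ and $x_i=P_{\tilde F_i}(x_{i-1})$. *)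

From Stdlib Require Import Reals ClassicalEpsilon.
From mathcomp Require Import all_boot.
Set Implicit Arguments. Unset Strict Implicit.
Open Scope R_scope.

Definition vec (n : nat) := 'I_n -> R.
Definition vadd n (x y : vec n) : vec n := fun i => x i + y i.
Definition vsub n (x y : vec n) : vec n := fun i => x i - y i.
Definition vscale n (c : R) (x : vec n) : vec n := fun i => c * x i.
Definition inner n (x y : vec n) : R := \big[Rplus/0]_(i < n) (x i * y i).
Definition vnorm n (x : vec n) : R := sqrt (inner x x).
Definition vdist n (x y : vec n) : R := vnorm (vsub x y).

Definition vball n (x : vec n) (r : R) (y : vec n) : Prop := vdist y x < r.
Definition vis_neighborhood n (V : vec n -> Prop) (x : vec n) : Prop :=
  exists r, 0 < r /\ forall y, vball x r y -> V y.
Definition vclosed_set n (C : vec n -> Prop) : Prop :=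
  forall x, (forall eps, 0 < eps -> exists y, C y /\ vdist x y < eps) -> C x.

(* d(x,C) = inf_{y in C} ||x - y|| (for nonempty C) *)
Definition is_dist_to n (C : vec n -> Prop) (x : vec n) (r : R) : Prop :=
  (forall y, C y -> r <= vdist x y) /\
  (forall r', (forall y, C y -> r' <= vdist x y) -> r' <= r).
Definition dist_set n (C : vec n -> Prop) (x : vec n) : R :=
  epsilon (inhabits 0) (fun r => is_dist_to C x r).

Definition proj_set n (C : vec n -> Prop) (x p : vec n) : Prop :=
  C p /\ forall y, C y -> vdist x p <= vdist x y.

Definition seq_cv n (s : nat -> vec n) (l : vec n) : Prop :=
  forall eps, 0 < eps -> exists N, forall i, (N <= i)%nat -> vdist (s i) l < eps.

Definition reg_normal n (C : vec n -> Prop) (xb y : vec n) : Prop :=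
  C xb /\ forall eps, 0 < eps -> exists r, 0 < r /\
    forall x, C x -> vdist x xb < r -> inner y (vsub x xb) <= eps * vdist x xb.

Definition lim_normal n (C : vec n -> Prop) (xb y : vec n) : Prop :=
  exists (xs ys : nat -> vec n), (forall i, C (xs i)) /\ seq_cv xs xb /\
    (forall i, reg_normal C (xs i) (ys i)) /\ seq_cv ys y.

Definition super_regular n (C : vec n -> Prop) (xb : vec n) : Prop :=
  C xb /\ forall delta, 0 < delta -> exists V, vis_neighborhood V xb /\
    forall z y v, C z -> V z -> C y -> V y -> lim_normal C y v ->
      inner (vsub z y) v <= delta * vdist z y * vnorm v.

(* the sets are K 0, ..., K (m-1) *)
Definition inter n (K : nat -> vec n -> Prop) (m : nat) (x : vec n) : Prop :=
  forall l, (l < m)%nat -> K l x.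
Definition maxd n (K : nat -> vec n -> Prop) (m : nat) (x : vec n) : R :=
  foldr Rmax 0 (map (fun l => dist_set (K l) x) (iota 0 m)).

Definition shqp_a n (x xp : nat -> vec n) (l : nat) : vec n :=
  vsub (x (l - 1)%nat) (xp l).
Definition shqp_b n (tau : nat -> R) (x xp : nat -> vec n) (l : nat) : R :=
  inner (shqp_a x xp l)
        (vadd (vscale (1 - tau l) (xp l)) (vscale (tau l) (x (l - 1)%nat))).
Definition shqp_F n (pbar : nat) (tau : nat -> R) (x xp : nat -> vec n)
  (i : nat) (y : vec n) : Prop :=
  forall l, (maxn 1 (i - pbar) <= l)%nat -> (l <= i)%nat ->
    inner (shqp_a x xp l) y <= shqp_b tau x xp l.

Definition shqp_run n (K : nat -> vec n -> Prop) (m pbar : nat) (tau : nat -> R)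
  (x0 : vec n) (x : nat -> vec n) : Prop :=
  x 0%nat = x0 /\
  exists (jb : nat -> nat) (xp : nat -> vec n), forall i, (1 <= i)%nat ->
    [/\ (jb i < m)%nat,
        (forall j, (j < m)%nat ->
           dist_set (K j) (x (i - 1)%nat) <= dist_set (K (jb i)) (x (i - 1)%nat)),
        proj_set (K (jb i)) (x (i - 1)%nat) (xp i)
      & proj_set (shqp_F pbar tau x xp i) (x (i - 1)%nat) (x i)].

From Stdlib Require Import Reals ClassicalEpsilon Classical Lra Psatz.
From Stdlib Require Import FunctionalExtensionality PropExtensionality.
From mathcomp Require Import all_boot.
Set Implicit Arguments. Unset Strict Implicit.
Open Scope R_scope.

(* Write s = 1 / (1 - rho), d_k = d(x_k, K) and D_k = max_l d(x_k, K_l) = |x_k - xp_{k+1}|, where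
   xp_{k+1} is the projection onto the farthest set. Super-regularity at xp_{k+1}, with a constant
   delta small compared with tau, shows that every point of K near x^* within (1 + s) beta D_k of
   x_k lies in the k-th halfspace. Inductively the nearest point of K to x_N is within that
   distance of every earlier iterate, so it lies in F_{N+1}; the projection x_{N+1} onto the
   convex set F_{N+1} then satisfies |x_N - x_{N+1}|^2 + d_{N+1}^2 <= d_N^2. Together with the
   lower bound |x_N - x_{N+1}| >= (1 - tau) D_N (x_{N+1} lies in its own halfspace) and the metric
   inequality d_N <= beta D_N this gives d_{N+1} <= rho d_N and |x_{N+1} - x_N| <= s (d_N -
   d_{N+1}). The iterates therefore stay near x^* and form a Cauchy sequence whose limit xbar lies
   in K, with |x_i - xbar| <= s d_i <= s beta D_i = L max_l d(x_i, K_l); as xbar again lies in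
   every F_{i+1}, Pythagoras also gives |x_{i+1} - xbar| <= |x_i - xbar|. *)

(** * Euclidean geometry of vec n *)

Section RealSums.
Variable n : nat.
Implicit Types f g : 'I_n -> R.

Lemma sumR_add f g :
  \big[Rplus/0]_(i < n) (f i + g i) = \big[Rplus/0]_(i < n) f i + \big[Rplus/0]_(i < n) g i.
Proof. by elim/big_rec3: _ => [|i a b c _ ->]; ring. Qed.

Lemma sumR_scale c f : \big[Rplus/0]_(i < n) (c * f i) = c * \big[Rplus/0]_(i < n) f i.
Proof. by elim/big_rec2: _ => [|i a b _ ->]; ring. Qed.

Lemma sumR_le f g : (forall i, f i <= g i) ->
  \big[Rplus/0]_(i < n) f i <= \big[Rplus/0]_(i < n) g i.
Proof. by move=> fg; elim/big_rec2: _ => [|i a b _ ab]; [lra | apply: Rplus_le_compat]. Qed.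

Lemma sumR_ge0 (r : seq 'I_n) f : (forall i, 0 <= f i) -> 0 <= \big[Rplus/0]_(i <- r) f i.
Proof. by move=> f0; elim/big_rec: _ => [|i a _ a0]; [lra | have ? := f0 i; lra]. Qed.

Lemma sumR_ge_term f i : (forall j, 0 <= f j) -> f i <= \big[Rplus/0]_(j < n) f j.
Proof.
move=> f0; have : i \in index_enum 'I_n by apply: mem_index_enum.
elim: (index_enum _) => // j r IH; rewrite inE big_cons => /orP [/eqP <-|/IH].
- by rewrite -[X in X <= _]Rplus_0_r; apply/Rplus_le_compat_l/sumR_ge0.
- by move=> le_i; rewrite -[X in X <= _]Rplus_0_l; apply: Rplus_le_compat.
Qed.

End RealSums.

Lemma sqr_le_inv (a b : R) : 0 <= b -> a * a <= b * b -> a <= b.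
Proof. by move=> *; nra. Qed.

Lemma uniform_radius (P : nat -> R -> Prop) (m : nat) :
  (forall l r r', 0 < r' <= r -> P l r -> P l r') ->
  (forall l, (l < m)%N -> exists r, 0 < r /\ P l r) ->
  exists r, 0 < r /\ forall l, (l < m)%N -> P l r.
Proof.
move=> P_mono; elim: m => [_|m IH P_ex]; first by exists 1; split => //; lra.
have [r [r_gt0 Pr]] := IH (fun l lm => P_ex l (ltnW lm)).
have [r' [r'_gt0 Pr']] := P_ex m (ltnSn m).
have rr'_gt0 := Rmin_glb_lt _ _ _ r_gt0 r'_gt0.
exists (Rmin r r'); split => // l; rewrite ltnS leq_eqVlt => /orP [/eqP ->|lm].
- by apply: P_mono Pr'; split => //; apply: Rmin_r.
- by apply: P_mono (Pr l lm); split => //; apply: Rmin_l.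
Qed.

Lemma Rmin_div_lt (d a b c : R) : 0 < c -> d < Rmin a b / c -> c * d < a /\ c * d < b.
Proof.
move=> c0 d_lt; have : c * d < Rmin a b.
  apply: (Rmult_lt_reg_r (/ c)); first exact: Rinv_0_lt_compat.
  by have -> : c * d * / c = d by field; lra.
by have := Rmin_l a b; have := Rmin_r a b; move=> *; lra.
Qed.

Lemma pow_scaled_lt (r c e : R) : 0 <= r < 1 -> 0 < e ->
  exists N, forall k, (N <= k)%N -> c * r ^ k < e.
Proof.
move=> r01 e0; have c0 := Rabs_pos c.
have [N rN] := pow_lt_1_zero r ltac:(rewrite Rabs_right; lra) (e / (Rabs c + 1))
  ltac:(apply: Rdiv_lt_0_compat; lra).
exists N => k /leP Nk; have rk0 : 0 <= r ^ k by apply: pow_le; lra.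
have := rN k Nk; rewrite Rabs_right; last lra.
move=> rk; apply: Rle_lt_trans (Rle_abs _) _; rewrite Rabs_mult (Rabs_right (r ^ k)); last lra.
apply: Rle_lt_trans (Rmult_le_compat_l _ _ _ c0 (Rlt_le _ _ rk)) _.
apply: (Rmult_lt_reg_r (Rabs c + 1)); first lra.
have -> : Rabs c * (e / (Rabs c + 1)) * (Rabs c + 1) = Rabs c * e by field; lra.
nra.
Qed.

Lemma argmax_exists (f : nat -> R) m : (0 < m)%N ->
  exists j, (j < m)%N /\ forall j', (j' < m)%N -> f j' <= f j.
Proof.
elim: m => // m IH _; have [m0|m_gt0] := posnP m.
  by exists 0%N; split => // j'; rewrite m0 ltnS leqn0 => /eqP ->; lra.
have [j [jm jmax]] := IH m_gt0; have [fmj|fjm] := Rle_lt_dec (f m) (f j).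
- exists j; split; first exact: ltnW.
  by move=> j'; rewrite ltnS leq_eqVlt => /orP [/eqP ->|] //; apply: jmax.
- exists m; split => // j'; rewrite ltnS leq_eqVlt => /orP [/eqP ->|/jmax]; lra.
Qed.

Lemma foldr_Rmax_le (f : nat -> R) (r : seq nat) M :
  0 <= M -> (forall a, a \in r -> f a <= M) -> foldr Rmax 0 (map f r) <= M.
Proof.
move=> M0; elim: r => //= a r IH fM; apply: Rmax_lub; first by apply: fM; rewrite inE eqxx.
by apply: IH => b br; apply: fM; rewrite inE br orbT.
Qed.

Lemma foldr_Rmax_ge (f : nat -> R) (r : seq nat) a :
  a \in r -> f a <= foldr Rmax 0 (map f r).
Proof.
elim: r => //= b r IH; rewrite inE => /orP [/eqP ->|ar]; first exact: Rmax_l.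
exact: Rle_trans (IH ar) (Rmax_r _ _).
Qed.

Section Euclidean.
Variable n : nat.
Implicit Types x y z : vec n.

Lemma inner_sym x y : inner x y = inner y x.
Proof. by apply: eq_bigr => i _; ring. Qed.

Lemma inner_addr x y z : inner z (vadd x y) = inner z x + inner z y.
Proof. by rewrite /inner -sumR_add; apply: eq_bigr => i _; rewrite /vadd; ring. Qed.

Lemma inner_scaler c x y : inner y (vscale c x) = c * inner y x.
Proof. by rewrite /inner -sumR_scale; apply: eq_bigr => i _; rewrite /vscale; ring. Qed.

Lemma inner_scalel c x y : inner (vscale c x) y = c * inner x y.
Proof. by rewrite inner_sym inner_scaler inner_sym. Qed.

Lemma inner_subr x y z : inner z (vsub x y) = inner z x - inner z y.
Proof.
have -> : vsub x y = vadd x (vscale (-1) y).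
  by apply: functional_extensionality => i; rewrite /vsub /vadd /vscale; ring.
by rewrite inner_addr inner_scaler; ring.
Qed.

Lemma inner_subl x y z : inner (vsub x y) z = inner x z - inner y z.
Proof. by rewrite inner_sym inner_subr (inner_sym x) (inner_sym y). Qed.

Lemma inner_sub_sqr x y : inner (vsub x y) (vsub x y) = inner x x - 2 * inner x y + inner y y.
Proof. by rewrite !inner_subl !inner_subr (inner_sym y x); ring. Qed.

Lemma inner_ge0 x : 0 <= inner x x.
Proof. by apply: sumR_ge0 => i; nra. Qed.

Lemma vnorm_ge0 x : 0 <= vnorm x.
Proof. exact: sqrt_pos. Qed.

Lemma vnorm_sqr x : vnorm x * vnorm x = inner x x.
Proof. exact/sqrt_sqrt/inner_ge0. Qed.

Lemma coord_le_vnorm x i : Rabs (x i) <= vnorm x.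
Proof.
have xi2 := sumR_ge_term i (fun j => ltac:(nra) : 0 <= x j * x j).
rewrite -[\big[Rplus/0]_(j < n) _]/(inner x x) -vnorm_sqr -[x i * x i]/(Rsqr (x i)) Rsqr_abs in xi2.
by apply: sqr_le_inv => //; apply: vnorm_ge0.
Qed.

Lemma vnorm_eq0_inner x y : vnorm x = 0 -> inner x y = 0.
Proof.
move=> x0; rewrite /inner; elim/big_rec: _ => // i s _ ->.
have xi : Rabs (x i) <= 0 by rewrite -x0; apply: coord_le_vnorm.
have -> : x i = 0 by have := Rle_abs (- x i); rewrite Rabs_Ropp; have := Rle_abs (x i); lra.
ring.
Qed.

(* Expanding |b x - a y|^2 >= 0 with a = |x|, b = |y| gives a b (a b - <x,y>) >= 0. *)
Lemma inner_le_vnorm x y : inner x y <= vnorm x * vnorm y.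
Proof.
have a0 := vnorm_ge0 x; have b0 := vnorm_ge0 y.
have := inner_ge0 (vsub (vscale (vnorm y) x) (vscale (vnorm x) y)).
rewrite inner_sub_sqr !inner_scalel !inner_scaler -!vnorm_sqr => key.
have [ab0|ab0] := Req_dec (vnorm x * vnorm y) 0; last by nra.
have [x0|y0] := Rmult_integral _ _ ab0.
- by rewrite vnorm_eq0_inner //; nra.
- by rewrite inner_sym vnorm_eq0_inner //; nra.
Qed.

Lemma vnorm_add_le x y : vnorm (vadd x y) <= vnorm x + vnorm y.
Proof.
apply: sqr_le_inv; first by have := vnorm_ge0 x; have := vnorm_ge0 y; move=> *; lra.
rewrite vnorm_sqr inner_addr !(inner_sym (vadd x y)) !inner_addr (inner_sym x y).
have cs := inner_le_vnorm x y; rewrite (inner_sym y x) -(vnorm_sqr x) -(vnorm_sqr y); nra.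
Qed.

Lemma vdist_sqr x y : vdist x y * vdist x y = inner (vsub x y) (vsub x y).
Proof. exact: vnorm_sqr. Qed.

Lemma vdist_ge0 x y : 0 <= vdist x y.
Proof. exact: vnorm_ge0. Qed.

Lemma vdist_triangle x y z : vdist x z <= vdist x y + vdist y z.
Proof.
rewrite /vdist; have -> : vsub x z = vadd (vsub x y) (vsub y z).
  by apply: functional_extensionality => i; rewrite /vsub /vadd; ring.
exact: vnorm_add_le.
Qed.

Lemma vdist_sym x y : vdist x y = vdist y x.
Proof. by rewrite /vdist /vnorm; f_equal; apply: eq_bigr => i _; rewrite /vsub; ring. Qed.

Lemma vdist_refl x : vdist x x = 0.
Proof.
apply: Rle_antisym; last exact: vdist_ge0.
by apply: sqr_le_inv; [lra | rewrite vdist_sqr inner_sub_sqr; lra].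
Qed.

End Euclidean.

(** * Sequential compactness and completeness *)

Lemma inv_INR_succ_lt (e : R) : 0 < e -> exists N : nat, / (INR N + 1) < e.
Proof.
move=> e0; have [N lt_eN] := INR_archimed e 1 ltac:(lra).
exists N; have ? := pos_INR N.
apply: (Rmult_lt_reg_l (INR N + 1)); first lra.
by rewrite Rinv_r; nra.
Qed.

Lemma inv_INR_succ_le (a b : nat) : (a <= b)%N -> / (INR b + 1) <= / (INR a + 1).
Proof.
move=> /leP /le_INR ab; have ? := pos_INR a.
by apply: Rinv_le_contravar; lra.
Qed.

Lemma inv_INR_succ_gt0 (a : nat) : 0 < / (INR a + 1).
Proof. by have ? := pos_INR a; apply: Rinv_0_lt_compat; lra. Qed.

Lemma strict_homo_geq_id (phi : nat -> nat) :
  {homo phi : s t / (s < t)%N} -> forall t, (t <= phi t)%N.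
Proof. by move=> phi_incr; elim=> // t IH; apply: leq_ltn_trans IH (phi_incr _ _ _). Qed.

Section RealSubsequence.
Variables (u : nat -> R) (l : R).

Definition pick_after (N : nat) (e : R) : nat :=
  epsilon (inhabits 0%N) (fun p => (N <= p)%N /\ Rabs (u p - l) < e).

Fixpoint cluster_subseq (t : nat) : nat :=
  pick_after (if t is t'.+1 then (cluster_subseq t').+1 else 0%N) (/ (INR t + 1)).

Hypothesis ul : ValAdh u l.

Lemma pick_after_spec N e : 0 < e -> (N <= pick_after N e)%N /\ Rabs (u (pick_after N e) - l) < e.
Proof.
move=> e0; apply: (epsilon_spec _ (fun p => (N <= p)%N /\ Rabs (u p - l) < e)).
have [|p [/leP Np up]] := @ul (fun r => Rabs (r - l) < e) N; first by exists (mkposreal e e0).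
by exists p.
Qed.

Lemma cluster_subseq_incr : {homo cluster_subseq : s t / (s < t)%N}.
Proof.
apply: homo_ltn => [? ? ? /ltn_trans|t]; first by apply.
exact: (pick_after_spec _ (inv_INR_succ_gt0 _)).1.
Qed.

Lemma cluster_subseq_cv : Un_cv (fun t => u (cluster_subseq t)) l.
Proof.
move=> e e0; have [N lt_Ne] := inv_INR_succ_lt e0; exists N => t /leP Nt.
have ut : Rabs (u (cluster_subseq t) - l) < / (INR t + 1).
  by case: t {Nt} => [|t]; exact: (pick_after_spec _ (inv_INR_succ_gt0 _)).2.
by have ? := inv_INR_succ_le Nt; rewrite /Rdist; lra.
Qed.

End RealSubsequence.

Lemma Rseq_bounded_cv_subseq (u : nat -> R) M : (forall t, Rabs (u t) <= M) ->
  exists phi, {homo phi : s t / (s < t)%N} /\ exists l, Un_cv (fun t => u (phi t)) l.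
Proof.
move=> uM; have [l ul] : exists l, ValAdh u l.
  apply: (Bolzano_Weierstrass u (fun c => -M <= c <= M) (compact_P3 (-M) M)) => t.
  by have := uM t; have := Rle_abs (u t); have := Rle_abs (- u t); rewrite Rabs_Ropp; move=> *; lra.
by exists (cluster_subseq u l); split; [exact: cluster_subseq_incr | exists l; exact: cluster_subseq_cv].
Qed.

Section VectorSequences.
Variable n : nat.

Lemma vnorm_le_coord_bound (v : vec n) M : 0 <= M -> (forall i, Rabs (v i) <= M) ->
  vnorm v <= (\big[Rplus/0]_(i < n) 1 + 1) * M.
Proof.
move=> M0 vM; set c := \big[Rplus/0]_(i < n) 1.
have c0 : 0 <= c by apply: sumR_ge0 => _; lra.
have vvM : inner v v <= c * (M * M).
  rewrite /c Rmult_comm -(sumR_scale (M * M) (fun _ => 1)); apply: sumR_le => i.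
  have := Rsqr_abs (v i); rewrite /Rsqr => ->; have ? := Rabs_pos (v i); have ? := vM i; nra.
by apply: sqr_le_inv; [nra | rewrite vnorm_sqr; nra].
Qed.

Lemma seq_cv_coord (s : nat -> vec n) (y : vec n) :
  (forall i, Un_cv (fun t => s t i) (y i)) -> seq_cv s y.
Proof.
move=> sy e e0; set c := \big[Rplus/0]_(i < n) 1.
have c0 : 0 <= c by apply: sumR_ge0 => _; lra.
have eta0 : 0 < e / (c + 2) by apply: Rdiv_lt_0_compat; lra.
have [N syN] := choice _ (fun i => sy i _ eta0).
exists (\max_(i < n) N i) => t t_ge.
have close i : Rabs (vsub (s t) y i) <= e / (c + 2).
  by apply/Rlt_le/syN/leP; apply: leq_trans (leq_bigmax i) t_ge.
apply: Rle_lt_trans (vnorm_le_coord_bound (Rlt_le _ _ eta0) close) _.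
have -> : (c + 1) * (e / (c + 2)) = e - e / (c + 2) by field; lra.
lra.
Qed.

Lemma vseq_bounded_cv_subseq (u : nat -> vec n) M : (forall t, vnorm (u t) <= M) ->
  exists phi, {homo phi : s t / (s < t)%N} /\ exists y, seq_cv (fun t => u (phi t)) y.
Proof.
move=> uM.
have coords : forall k, exists phi, {homo phi : s t / (s < t)%N} /\
    forall i : 'I_n, (i < k)%N -> exists l, Un_cv (fun t => u (phi t) i) l.
  elim=> [|k [phi [phi_incr IH]]]; first by exists id; split => // i.
  have [kn|nk] := ltnP k n; last first.
    by exists phi; split => // i ik; apply: IH; apply: leq_trans (ltn_ord i) nk.
  have [psi [psi_incr [l ul]]] := Rseq_bounded_cv_subseq (u := fun t => u (phi t) (Ordinal kn))
    (fun t => Rle_trans _ _ _ (coord_le_vnorm _ _) (uM _)).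
  exists (fun t => phi (psi t)); split; first by move=> s t st; apply/phi_incr/psi_incr.
  move=> i; rewrite ltnS leq_eqVlt => /orP [/eqP ik|ik].
  + have -> : i = Ordinal kn by apply: val_inj.
    by exists l.
  + have [l' ul'] := IH i ik; exists l' => e e0; have [N uN] := ul' e e0.
    exists N => t /leP Nt; apply: uN; apply/leP.
    exact: leq_trans Nt (strict_homo_geq_id psi_incr t).
have [phi [phi_incr cv]] := coords n.
have [y uy] := choice _ (fun i : 'I_n => cv i (ltn_ord i)).
by exists phi; split => //; exists y; apply: seq_cv_coord.
Qed.

Lemma vseq_cauchy_cv (s : nat -> vec n) :
  (forall e, 0 < e -> exists N, forall j k, (N <= j)%N -> (N <= k)%N -> vdist (s j) (s k) < e) ->
  exists y, seq_cv s y.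
Proof.
move=> s_cauchy.
have cv i : exists l, Un_cv (fun t => s t i) l.
  have crit : Cauchy_crit (fun t => s t i).
    move=> e e0; have [N sN] := s_cauchy e e0; exists N => j k /leP Nj /leP Nk.
    exact: Rle_lt_trans (coord_le_vnorm (vsub (s j) (s k)) i) (sN j k Nj Nk).
  by have [l ?] := R_complete _ crit; exists l.
by have [y sy] := choice _ cv; exists y; apply: seq_cv_coord.
Qed.

End VectorSequences.

(** * Distances and projections *)

Section DistanceToSets.
Variable n : nat.
Implicit Types (C : vec n -> Prop) (x y z p : vec n).

Lemma is_dist_to_exists C x : (exists y, C y) -> exists r, is_dist_to C x r.
Proof.
move=> [y0 Cy0]; pose E r := exists y, C y /\ r = - vdist x y.
have E_bound : bound E by exists 0 => _ [y [_ ->]]; have ? := vdist_ge0 x y; lra.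
have [sup [sup_ub sup_lub]] := completeness E E_bound (ex_intro _ _ (ex_intro _ y0 (conj Cy0 erefl))).
exists (- sup); split.
- by move=> y Cy; have ? := sup_ub _ (ex_intro _ y (conj Cy erefl)); lra.
- move=> r' r'_lb; suff : sup <= - r' by lra.
  by apply: sup_lub => _ [y [Cy ->]]; have ? := r'_lb y Cy; lra.
Qed.

Lemma dist_set_spec C x : (exists y, C y) -> is_dist_to C x (dist_set C x).
Proof. by move=> C0; apply: epsilon_spec; apply: is_dist_to_exists. Qed.

Lemma dist_set_le C x y : C y -> dist_set C x <= vdist x y.
Proof. by move=> Cy; apply: (dist_set_spec x (ex_intro _ y Cy)).1. Qed.

Lemma dist_set_ge0 C x : (exists y, C y) -> 0 <= dist_set C x.
Proof. by move=> C0; apply: (dist_set_spec x C0).2 => y _; apply: vdist_ge0. Qed.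

Lemma dist_set_approx C x e : (exists y, C y) -> 0 < e ->
  exists y, C y /\ vdist x y < dist_set C x + e.
Proof.
move=> C0 e0; apply: NNPP => no_y.
suff : dist_set C x + e <= dist_set C x by lra.
apply: (dist_set_spec x C0).2 => y Cy; apply: Rnot_lt_le => lt_y.
by apply: no_y; exists y.
Qed.

Lemma dist_set_proj C x p : proj_set C x p -> dist_set C x = vdist x p.
Proof.
move=> [Cp p_min]; apply: Rle_antisym; first exact: dist_set_le.
exact: (dist_set_spec x (ex_intro _ p Cp)).2.
Qed.

Lemma dist_set_sub C C' x : (forall y, C y -> C' y) -> (exists y, C y) ->
  dist_set C' x <= dist_set C x.
Proof.
move=> CC' C0; apply: (dist_set_spec x C0).2 => y Cy.
exact/dist_set_le/CC'.
Qed.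

Lemma vnorm_le_vdist x y : vnorm y <= vnorm x + vdist x y.
Proof.
have -> : vnorm y = vnorm (vadd x (vsub y x)).
  by f_equal; apply: functional_extensionality => i; rewrite /vadd /vsub; ring.
by rewrite (vdist_sym x y); apply: vnorm_add_le.
Qed.

Lemma seq_cv_vdist_le (s : nat -> vec n) y w M N : seq_cv s y ->
  (forall k, (N <= k)%N -> vdist (s k) w <= M) -> vdist y w <= M.
Proof.
move=> sy sM; apply: le_epsilon => e e0; have [N' sN'] := sy e e0.
have := vdist_triangle y (s (maxn N N')) w.
have := sN' _ (leq_maxr N N'); rewrite vdist_sym.
have := sM _ (leq_maxl N N'); move=> *; lra.
Qed.

Lemma proj_set_exists C x : vclosed_set C -> (exists y, C y) -> exists p, proj_set C x p.
Proof.
move=> C_closed C0; set d := dist_set C x.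
have [ys ys_min] : exists ys : nat -> vec n,
    forall t, C (ys t) /\ vdist x (ys t) < d + / (INR t + 1).
  apply: (choice (fun t y => C y /\ vdist x y < d + / (INR t + 1))) => t.
  by apply: dist_set_approx => //; apply: inv_INR_succ_gt0.
have ys_bounded t : vnorm (ys t) <= vnorm x + d + 1.
  have := vnorm_le_vdist x (ys t); have := (ys_min t).2.
  have := inv_INR_succ_le (leq0n t); rewrite /= Rplus_0_l Rinv_1; move=> *; lra.
have [phi [phi_incr [p ys_p]]] := vseq_bounded_cv_subseq ys_bounded.
have Cp : C p.
  apply: C_closed => e e0; have [N ysN] := ys_p e e0.
  by exists (ys (phi N)); split; [exact: (ys_min _).1 | rewrite vdist_sym; apply: ysN].
exists p; split => // w Cw; apply: Rle_trans (dist_set_le x Cw); rewrite -/d.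
apply: le_epsilon => e e0; have [N lt_Ne] := inv_INR_succ_lt e0.
rewrite vdist_sym; apply: (seq_cv_vdist_le (N := N) ys_p) => t Nt.
have := (ys_min (phi t)).2; rewrite vdist_sym.
have := inv_INR_succ_le (leq_trans Nt (strict_homo_geq_id phi_incr t)); move=> *; lra.
Qed.

End DistanceToSets.

Section ConvexProjection.
Variable n : nat.
Implicit Types (C F : vec n -> Prop) (x y z p : vec n).

Definition convex F := forall y z t, F y -> F z -> 0 <= t <= 1 ->
  F (vadd (vscale (1 - t) y) (vscale t z)).

Lemma proj_inner_le C x p z : proj_set C x p -> C z ->
  2 * inner (vsub x p) (vsub z p) <= inner (vsub z p) (vsub z p).
Proof.
move=> [_ p_min] Cz.
have : vdist x p * vdist x p <= vdist x z * vdist x z.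
  by have ? := p_min z Cz; have ? := vdist_ge0 x p; nra.
rewrite !vdist_sqr; have -> : vsub x z = vsub (vsub x p) (vsub z p).
  by apply: functional_extensionality => i; rewrite /vsub; ring.
by rewrite !inner_sub_sqr; move=> ?; lra.
Qed.

Lemma proj_convex_inner_le0 F x p z : convex F -> proj_set F x p -> F z ->
  inner (vsub x p) (vsub z p) <= 0.
Proof.
move=> F_cvx p_proj Fz; set c := inner _ _; set W := inner (vsub z p) (vsub z p).
have W0 : 0 <= W by apply: inner_ge0.
apply: Rnot_lt_le => c0; set t := c / (c + W).
have t01 : 0 < t <= 1.
  split; first by apply: Rdiv_lt_0_compat; lra.
  by apply: (Rmult_le_reg_r (c + W)); [lra | rewrite /t /Rdiv Rmult_assoc Rinv_l; lra].
have := proj_inner_le p_proj (F_cvx _ _ t p_proj.1 Fz ltac:(lra)).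
have -> : vsub (vadd (vscale (1 - t) p) (vscale t z)) p = vscale t (vsub z p).
  by apply: functional_extensionality => i; rewrite /vsub /vadd /vscale; ring.
rewrite inner_scalel !inner_scaler -/c -/W => le_tW.
have : t * W <= c.
  rewrite /t; apply: (Rmult_le_reg_r (c + W)); first lra.
  have -> : c / (c + W) * W * (c + W) = c * W by field; lra.
  nra.
nra.
Qed.

Lemma proj_convex_pythagoras F x p z : convex F -> proj_set F x p -> F z ->
  vdist x p * vdist x p + vdist p z * vdist p z <= vdist x z * vdist x z.
Proof.
move=> F_cvx p_proj Fz; have := proj_convex_inner_le0 F_cvx p_proj Fz.
rewrite (vdist_sym p z) !vdist_sqr; have -> : vsub x z = vsub (vsub x p) (vsub z p).
  by apply: functional_extensionality => i; rewrite /vsub; ring.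
by rewrite (inner_sub_sqr (vsub x p)); move=> ?; lra.
Qed.

Lemma proj_lim_normal C x p : proj_set C x p -> lim_normal C p (vsub x p).
Proof.
move=> p_proj; have reg : reg_normal C p (vsub x p).
  split; first exact: p_proj.1.
  move=> e e0; exists (2 * e); split => [|z Cz zp]; first lra.
  have := proj_inner_le p_proj Cz; rewrite -vdist_sqr.
  have ? := vdist_ge0 z p; move=> *; nra.
have cst (y : vec n) : seq_cv (fun=> y) y by move=> e e0; exists 0%N => i _; rewrite vdist_refl.
exists (fun=> p), (fun=> vsub x p); split; first by move=> _; exact: p_proj.1.
by split; [apply: cst | split; [move=> _; exact: reg | apply: cst]].
Qed.

Lemma halfspace_convex (a : vec n) b : convex (fun y => inner a y <= b).
Proof.
move=> y z t ay az t01; rewrite inner_addr !inner_scaler.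
have := Rmult_le_compat_l (1 - t) _ _ ltac:(lra) ay.
have := Rmult_le_compat_l t _ _ ltac:(lra) az; move=> *; lra.
Qed.

Lemma halfspace_closed (a : vec n) b : vclosed_set (fun y => inner a y <= b).
Proof.
move=> q q_lim; apply: le_epsilon => e e0; have a0 := vnorm_ge0 a.
have [y [ay qy]] := q_lim (e / (vnorm a + 1)) ltac:(apply: Rdiv_lt_0_compat; lra).
have -> : inner a q = inner a y + inner a (vsub q y) by rewrite inner_subr; ring.
have := inner_le_vnorm a (vsub q y); rewrite -/(vdist q y) => le_aqy.
suff : vnorm a * vdist q y <= e by lra.
apply: Rle_trans (Rmult_le_compat_l _ _ _ a0 (Rlt_le _ _ qy)) _.
apply: (Rmult_le_reg_r (vnorm a + 1)); first lra.
have -> : vnorm a * (e / (vnorm a + 1)) * (vnorm a + 1) = vnorm a * e by field; lra.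
nra.
Qed.

End ConvexProjection.

(** * The SHQP iteration *)

Lemma contraction_rate_spec (beta tau : R) : 1 <= beta -> 0 < tau < 1 ->
  let rho := sqrt (beta ^ 2 - (1 - tau) ^ 2) / beta in
  0 <= rho < 1 /\ rho * rho * (beta * beta) = beta * beta - (1 - tau) * (1 - tau).
Proof.
move=> beta1 tau01 rho; have disc_gt0 : 0 < beta ^ 2 - (1 - tau) ^ 2 by rewrite /= !Rmult_1_r; nra.
have sq := sqrt_sqrt _ (Rlt_le _ _ disc_gt0); have sq0 := sqrt_pos (beta ^ 2 - (1 - tau) ^ 2).
have rho_def : rho * rho * (beta * beta) = beta * beta - (1 - tau) * (1 - tau).
  have -> : rho * rho * (beta * beta) = sqrt (beta ^ 2 - (1 - tau) ^ 2) * sqrt (beta ^ 2 - (1 - tau) ^ 2).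
    by rewrite /rho; field; lra.
  by rewrite sq /=; ring.
split => //; split; first by apply: Rmult_le_pos => //; apply/Rlt_le/Rinv_0_lt_compat; lra.
have sqrt_lt : sqrt (beta ^ 2 - (1 - tau) ^ 2) < beta by rewrite /= !Rmult_1_r in sq sq0 *; nra.
rewrite /rho; apply: (Rmult_lt_reg_r beta); first lra.
by rewrite /Rdiv Rmult_assoc Rinv_l; lra.
Qed.

Lemma super_regular_uniform n m (K : nat -> vec n -> Prop) (xs : vec n) delta :
  (forall l, (l < m)%N -> super_regular (K l) xs) -> 0 < delta ->
  exists rd, 0 < rd /\ forall l, (l < m)%N -> forall z y v,
    K l z -> vdist z xs < rd -> K l y -> vdist y xs < rd -> lim_normal (K l) y v ->
    inner (vsub z y) v <= delta * vdist z y * vnorm v.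
Proof.
move=> K_sr delta_gt0; apply: uniform_radius.
  by move=> l r r' r'r Pr z y v Kz zr Ky yr; apply: Pr => //; lra.
move=> l lm; have [_ /(_ delta delta_gt0) [V [[r [r_gt0 rV]] V_sr]]] := K_sr l lm.
by exists r; split => // z y v Kz zr Ky yr; apply: V_sr => //; apply: rV.
Qed.

(* Used with A = |x_N - x_{N+1}|, d = d(x_N, K), d1 = d(x_{N+1}, K) <= B = |x_{N+1} - z|
   for the nearest point z of K to x_N, and D = max_l d(x_N, K_l). *)
Lemma descent_arith (beta tau rho s A B d d1 D : R) :
  0 < beta -> tau < 1 -> 0 <= rho < 1 ->
  rho * rho * (beta * beta) = beta * beta - (1 - tau) * (1 - tau) -> s * (1 - rho) = 1 ->
  0 <= A -> 0 <= d -> 0 <= d1 -> 0 <= D ->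
  A * A + B * B <= d * d -> d1 <= B -> (1 - tau) * D <= A -> d <= beta * D ->
  d1 <= rho * d /\ A <= s * (d - d1).
Proof.
move=> beta0 tau1 [rho0 rho1] rho_def s_def A0 d0 d10 D0 pyth d1B AD dD.
have d1d1 : d1 * d1 <= d * d - A * A by nra.
have dA : (1 - tau) * (1 - tau) * (d * d) <= beta * beta * (A * A).
  have ? : (1 - tau) * d <= beta * A by nra.
  have ? : 0 <= (1 - tau) * d by nra.
  nra.
have d1_rho : (beta * d1) * (beta * d1) <= (rho * beta * d) * (rho * beta * d).
  have -> : (rho * beta * d) * (rho * beta * d) = rho * rho * (beta * beta) * (d * d) by ring.
  by rewrite rho_def; nra.
have d1_le : d1 <= rho * d.
  apply: (Rmult_le_reg_l beta) => //; rewrite -Rmult_assoc (Rmult_comm beta rho).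
  by apply: sqr_le_inv d1_rho; repeat apply: Rmult_le_pos; lra.
split => //; have Ad : A <= d by apply: sqr_le_inv => //; nra.
have -> : s * (d - d1) = s * (1 - rho) * d + s * (rho * d - d1) by ring.
have ? : 0 <= s by nra.
by rewrite s_def; nra.
Qed.

Section SHQPAnalysis.
Variables (n m pbar : nat) (K : nat -> vec n -> Prop) (xs x0 : vec n) (V1 : vec n -> Prop).
Variables (beta tau rho s delta r1 rd : R).
Hypothesis K_closed : forall l, (l < m)%N -> vclosed_set (K l).
Hypothesis K_xs : inter K m xs.
Hypothesis beta_gt0 : 0 < beta.
Hypothesis tau01 : 0 < tau < 1.
Hypothesis V1_ball : forall y, vdist y xs < r1 -> V1 y.
Hypothesis metric_ineq : forall y, V1 y -> dist_set (inter K m) y <= beta * maxd K m y.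
Hypothesis rho01 : 0 <= rho < 1.
Hypothesis rho_def : rho * rho * (beta * beta) = beta * beta - (1 - tau) * (1 - tau).
Hypothesis s_def : s * (1 - rho) = 1.
Hypothesis delta_ge0 : 0 <= delta.
Hypothesis delta_small : delta * ((1 + s) * beta + 1) <= tau.
Hypothesis K_super_regular : forall l, (l < m)%N -> forall z y v,
  K l z -> vdist z xs < rd -> K l y -> vdist y xs < rd -> lim_normal (K l) y v ->
  inner (vsub z y) v <= delta * vdist z y * vnorm v.
(* Keeps every x_k within (1 + s) |x0 - xs| and every xp_{k+1} within (2 + s) |x0 - xs| of xs. *)
Hypothesis x0_rd : (2 + s) * vdist x0 xs < rd.
Hypothesis x0_r1 : (1 + s) * vdist x0 xs < r1.

Lemma s_ge1 : 1 <= s.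
Proof. by nra. Qed.

Lemma inter_nonempty : exists y, inter K m y.
Proof. by exists xs. Qed.

Lemma inter_closed : vclosed_set (inter K m).
Proof.
move=> y y_lim l lm; apply: (K_closed lm) => e e0.
by have [z [Kz yz]] := y_lim e e0; exists z; split => //; apply: Kz.
Qed.

Section Run.
Variables (x xp : nat -> vec n) (jb : nat -> nat).
Hypothesis x_0 : x 0%N = x0.

Local Notation F := (shqp_F pbar (fun=> tau) x xp).

(* jb (k+1) and xp (k+1) are the paper's \bar j_{k+1} and x_{k+1}^{(\bar j_{k+1})}. *)
Definition greedy_at k := [/\ (jb k.+1 < m)%N,
  forall j, (j < m)%N -> dist_set (K j) (x k) <= dist_set (K (jb k.+1)) (x k)
  & proj_set (K (jb k.+1)) (x k) (xp k.+1)].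
Definition halfspace_step k := proj_set (F k.+1) (x k) (x k.+1).
Definition dK k := dist_set (inter K m) (x k).
Definition dmax k := vdist (x k) (xp k.+1).
Definition descent N := forall k, (k < N)%N ->
  vdist (x k.+1) (x k) <= s * (dK k - dK k.+1) /\ dK k.+1 <= rho * dK k.

Hypothesis greedy : forall k, greedy_at k.

Lemma dK_ge0 k : 0 <= dK k.
Proof. exact: dist_set_ge0 inter_nonempty. Qed.

Lemma dmax_le_dK k : dmax k <= dK k.
Proof.
have [jm _ xp_proj] := greedy k; rewrite /dmax -(dist_set_proj xp_proj).
by apply: dist_set_sub inter_nonempty => y Ky; apply: Ky.
Qed.

Lemma maxd_eq_dmax k : maxd K m (x k) = dmax k.
Proof.
have [jm jmax xp_proj] := greedy k; rewrite /dmax -(dist_set_proj xp_proj).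
apply: Rle_antisym; last by apply: (foldr_Rmax_ge (fun l => dist_set (K l) (x k))); rewrite mem_iota.
apply: foldr_Rmax_le; first by apply: dist_set_ge0; exists xs; apply: K_xs.
by move=> a; rewrite mem_iota => /andP [_ am]; apply: jmax.
Qed.

Lemma dK_le_dmax k : vdist (x k) xs < r1 -> dK k <= beta * dmax k.
Proof. by move=> near; rewrite -maxd_eq_dmax; apply/metric_ineq/V1_ball. Qed.

Lemma descent_telescope N j k : descent N -> (j <= k <= N)%N ->
  vdist (x k) (x j) <= s * (dK j - dK k) /\ dK k <= dK j.
Proof.
move=> desc /andP [jk kN]; rewrite -(subnKC jk) in kN *.
elim: (k - j)%N kN => [|t IH]; first by rewrite addn0 vdist_refl; have := s_ge1; lra.
rewrite addnS => tN; have [IH1 IH2] := IH (ltnW tN); have [step1 step2] := desc _ tN.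
have := vdist_triangle (x (j + t).+1) (x (j + t)) (x j).
have := dK_ge0 (j + t); have := dK_ge0 (j + t).+1; move=> *; split; nra.
Qed.

Lemma descent_bounds N k : descent N -> (k <= N)%N ->
  dK k <= vdist x0 xs /\ vdist (x k) xs <= (1 + s) * vdist x0 xs.
Proof.
move=> desc kN; have [xk dk] := descent_telescope desc (k := k) (j := 0) kN.
have d0 : dK 0 <= vdist x0 xs by rewrite /dK x_0; apply: dist_set_le.
have := vdist_triangle (x k) (x 0%N) xs; rewrite x_0 in xk *.
have := dK_ge0 k; have := s_ge1; move=> *; split; nra.
Qed.

Lemma descent_near_r1 N k : descent N -> (k <= N)%N -> vdist (x k) xs < r1.
Proof. by move=> desc kN; have [_ ?] := descent_bounds desc kN; lra. Qed.

Lemma descent_xp_near N k : descent N -> (k <= N)%N -> vdist (xp k.+1) xs < rd.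
Proof.
move=> desc kN; have [? ?] := descent_bounds desc kN.
have := vdist_triangle (xp k.+1) (x k) xs; rewrite (vdist_sym _ (x k)) -/(dmax k).
have := dmax_le_dK k; have := vdist_ge0 x0 xs; move=> *; lra.
Qed.

Lemma shqp_a_succ k : shqp_a x xp k.+1 = vsub (x k) (xp k.+1).
Proof. by rewrite /shqp_a subn1. Qed.

Lemma shqp_b_succ k : shqp_b (fun=> tau) x xp k.+1 =
  inner (vsub (x k) (xp k.+1)) (xp k.+1) + tau * (dmax k * dmax k).
Proof.
rewrite /shqp_b shqp_a_succ subn1 /= /dmax vdist_sqr -inner_scaler -inner_addr.
by f_equal; apply: functional_extensionality => i; rewrite /vadd /vscale /vsub; ring.
Qed.

(* Super-regularity at xp_{k+1}, applied to the proximal normal x_k - xp_{k+1}. *)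
Lemma halfspace_contains k w : inter K m w -> vdist w xs < rd -> vdist (xp k.+1) xs < rd ->
  vdist w (x k) <= (1 + s) * beta * dmax k ->
  inner (shqp_a x xp k.+1) w <= shqp_b (fun=> tau) x xp k.+1.
Proof.
move=> Kw w_near xp_near w_close; have [jm _ xp_proj] := greedy k.
rewrite shqp_a_succ shqp_b_succ; set a := vsub (x k) (xp k.+1).
have normal := K_super_regular jm (Kw _ jm) w_near xp_proj.1 xp_near (proj_lim_normal xp_proj).
rewrite -/a -[vnorm a]/(dmax k) in normal.
have -> : inner a w = inner a (xp k.+1) + inner (vsub w (xp k.+1)) a.
  by rewrite inner_subl (inner_sym w a) (inner_sym (xp k.+1) a); ring.
have w_xp : vdist w (xp k.+1) <= ((1 + s) * beta + 1) * dmax k.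
  by have := vdist_triangle w (x k) (xp k.+1); rewrite -/(dmax k); lra.
have D0 : 0 <= dmax k := vdist_ge0 _ _.
suff : delta * vdist w (xp k.+1) * dmax k <= tau * (dmax k * dmax k) by lra.
apply: Rle_trans (_ : delta * (((1 + s) * beta + 1) * dmax k) * dmax k <= _).
  by apply: Rmult_le_compat_r => //; apply: Rmult_le_compat_l.
have -> : delta * (((1 + s) * beta + 1) * dmax k) * dmax k =
  delta * ((1 + s) * beta + 1) * (dmax k * dmax k) by ring.
by apply: Rmult_le_compat_r => //; nra.
Qed.

Lemma shqp_F_contains N w : descent N -> inter K m w -> vdist w xs < rd ->
  (forall k, (k <= N)%N -> vdist w (x k) <= (1 + s) * beta * dmax k) -> F N.+1 w.
Proof.
move=> desc Kw w_near w_close [|k] l_ge l_le; first by rewrite geq_max in l_ge.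
by apply: halfspace_contains => //; [apply: descent_xp_near desc _ | apply: w_close].
Qed.

(* The nearest point z of K to x_N satisfies |z - x_k| <= s d(x_k, K) <= s beta D_k for k <= N. *)
Lemma proj_inter_in_shqp_F N : descent N ->
  exists z, proj_set (inter K m) (x N) z /\ F N.+1 z.
Proof.
move=> desc; have [z z_proj] := proj_set_exists (x N) inter_closed inter_nonempty.
exists z; split => //; have zN : vdist z (x N) = dK N by rewrite vdist_sym /dK (dist_set_proj z_proj).
apply: shqp_F_contains => //; first exact: z_proj.1.
  have [? ?] := descent_bounds desc (leqnn N).
  by have := vdist_triangle z (x N) xs; have := vdist_ge0 x0 xs; move=> *; lra.
move=> k kN; have [xNk dKN] := descent_telescope desc (j := k) (k := N) (introT andP (conj kN (leqnn N))).
have := vdist_triangle z (x N) (x k); have := dK_le_dmax (descent_near_r1 desc kN).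
have := dK_ge0 N; have := s_ge1; move=> *; nra.
Qed.

Lemma shqp_F_convex i : convex (F i).
Proof.
by move=> y z t Fy Fz t01 l l1 li; apply: halfspace_convex (Fy l l1 li) (Fz l l1 li) t01.
Qed.

Lemma shqp_F_closed i : vclosed_set (F i).
Proof.
move=> q q_lim l l1 li; apply: halfspace_closed => e e0.
by have [y [Fy qy]] := q_lim e e0; exists y; split => //; apply: Fy.
Qed.

Lemma halfspace_step_lb N : halfspace_step N -> (1 - tau) * dmax N <= vdist (x N) (x N.+1).
Proof.
move=> [FxN1 _]; have window : (maxn 1 (N.+1 - pbar) <= N.+1)%N by rewrite geq_max leq_subr.
have := FxN1 N.+1 window (leqnn _); rewrite shqp_a_succ shqp_b_succ.
set a := vsub (x N) (xp N.+1) => in_halfspace.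
have key : (1 - tau) * (dmax N * dmax N) <= dmax N * vdist (x N) (x N.+1).
  apply: Rle_trans (inner_le_vnorm a (vsub (x N) (x N.+1))).
  have aa : inner a a = dmax N * dmax N by rewrite -vnorm_sqr.
  have a_split : inner a a = inner a (x N) - inner a (xp N.+1) by rewrite {2}/a inner_subr.
  rewrite inner_subr; lra.
have [Dpos|<-] := Rle_lt_or_eq_dec 0 (dmax N) (vdist_ge0 _ _).
  by apply: (Rmult_le_reg_l (dmax N)) => //; nra.
by rewrite Rmult_0_r; apply: vdist_ge0.
Qed.

Lemma descent_succ N : descent N -> halfspace_step N -> descent N.+1.
Proof.
move=> desc step k; rewrite ltnS leq_eqVlt => /orP [/eqP ->|kN]; last exact: desc.
have [z [z_proj Fz]] := proj_inter_in_shqp_F desc.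
have pyth := proj_convex_pythagoras (@shqp_F_convex N.+1) step Fz.
rewrite -(dist_set_proj z_proj) -/(dK N) in pyth; rewrite vdist_sym.
have [? ?] := descent_arith (s := s) (d1 := dK N.+1) beta_gt0 (proj2 tau01) rho01 rho_def s_def
  (vdist_ge0 _ _) (dK_ge0 N) (dK_ge0 N.+1) (vdist_ge0 _ _) pyth (dist_set_le _ z_proj.1)
  (halfspace_step_lb step) (dK_le_dmax (descent_near_r1 desc (leqnn N))).
by split.
Qed.

Lemma descent_of_steps N : (forall k, (k < N)%N -> halfspace_step k) -> descent N.
Proof.
elim: N => [_ k //|N IH steps]; apply: descent_succ; last exact: steps.
by apply: IH => k kN; apply/steps/ltnW.
Qed.

Section Converging.
Hypothesis steps : forall k, halfspace_step k.

Lemma descent_all N : descent N.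
Proof. by apply: descent_of_steps => k _; apply: steps. Qed.

Lemma dK_geometric k : dK k <= rho ^ k * vdist x0 xs.
Proof.
elim: k => [|k IH]; first by rewrite /= Rmult_1_l; apply: (descent_bounds (descent_all (N := 0%N)) (leqnn 0%N)).1.
have [_ dk] := descent_all (ltnSn k); rewrite /= Rmult_assoc.
by apply: Rle_trans dk (Rmult_le_compat_l _ _ _ (proj1 rho01) IH).
Qed.

Lemma run_vdist_le j k : (j <= k)%N -> vdist (x k) (x j) <= s * dK j.
Proof.
move=> jk; have [xkj _] := descent_telescope (descent_all (N := k)) (introT andP (conj jk (leqnn k))).
by have := dK_ge0 k; have := s_ge1; move=> *; nra.
Qed.

Lemma run_cv : exists xbar, seq_cv x xbar.
Proof.
apply: vseq_cauchy_cv => e e0; have [N small] := pow_scaled_lt (s * vdist x0 xs) rho01 e0.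
suff close j k : (N <= j <= k)%N -> vdist (x k) (x j) < e.
  exists N => j k Nj Nk; have [jk|kj] := leqP j k.
  - by rewrite vdist_sym; apply: close; rewrite Nj jk.
  - by apply: close; rewrite Nk ltnW.
move=> /andP [Nj jk]; apply: Rle_lt_trans (run_vdist_le jk) _.
apply: Rle_lt_trans (small j Nj); rewrite Rmult_assoc (Rmult_comm (vdist x0 xs)).
by apply: Rmult_le_compat_l; [have := s_ge1; lra | apply: dK_geometric].
Qed.

Section Limit.
Variable xbar : vec n.
Hypothesis x_xbar : seq_cv x xbar.

Lemma limit_vdist_le i : vdist xbar (x i) <= s * dK i.
Proof. by apply: (seq_cv_vdist_le (N := i) x_xbar) => k; apply: run_vdist_le. Qed.

Lemma limit_near : vdist xbar xs <= (1 + s) * vdist x0 xs.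
Proof.
have := limit_vdist_le 0%N; have [d0 _] := descent_bounds (descent_all (N := 0%N)) (leqnn 0%N).
have := vdist_triangle xbar (x 0%N) xs; rewrite x_0.
by have := s_ge1; have := vdist_ge0 x0 xs; move=> *; nra.
Qed.

Lemma limit_in_inter : inter K m xbar.
Proof.
move=> l lm; apply: (K_closed lm) => e e0.
have [N small] := pow_scaled_lt ((1 + s) * vdist x0 xs) rho01 e0.
have [z z_proj] := proj_set_exists (x N) inter_closed inter_nonempty.
exists z; split; first exact: z_proj.1.
have := vdist_triangle xbar (x N) z; rewrite -(dist_set_proj z_proj) -/(dK N).
have := limit_vdist_le N; have := small N (leqnn N); have := dK_geometric N.
by have := dK_ge0 N; have := s_ge1; move=> *; nra.
Qed.

Lemma limit_fejer i : vdist (x i.+1) xbar <= vdist (x i) xbar.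
Proof.
have F_xbar : F i.+1 xbar.
  apply: shqp_F_contains limit_in_inter _ _; first exact: descent_all.
    by have := limit_near; have := s_ge1; have := vdist_ge0 x0 xs; move=> *; nra.
  move=> k ki; apply: Rle_trans (limit_vdist_le k) _.
  have := dK_le_dmax (descent_near_r1 (descent_all (N := i)) ki); have := dK_ge0 k.
  by have := vdist_ge0 (x k) (xp k.+1); have := s_ge1; rewrite -/(dmax k); move=> *; nra.
have := proj_convex_pythagoras (@shqp_F_convex i.+1) (steps i) F_xbar.
by have := vdist_ge0 (x i) (x i.+1); move=> *; apply: sqr_le_inv; [apply: vdist_ge0 | nra].
Qed.

Lemma limit_error_bound i : vdist (x i) xbar <= s * beta * maxd K m (x i).
Proof.
rewrite vdist_sym maxd_eq_dmax Rmult_assoc; apply: Rle_trans (limit_vdist_le i) _.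
apply: Rmult_le_compat_l; first by have := s_ge1; lra.
exact: dK_le_dmax (descent_near_r1 (descent_all (N := i)) (leqnn i)).
Qed.

End Limit.

Lemma run_converges : exists xbar, inter K m xbar /\ V1 xbar /\ seq_cv x xbar /\
  forall i, vdist (x i.+1) xbar <= vdist (x i) xbar /\ vdist (x i) xbar <= s * beta * maxd K m (x i).
Proof.
have [xbar x_xbar] := run_cv; exists xbar; split; first exact: limit_in_inter.
split; first by apply: V1_ball; have := limit_near x_xbar; lra.
by split => // i; split; [apply: limit_fejer | apply: limit_error_bound].
Qed.

End Converging.
End Run.

Hypothesis m_gt0 : (0 < m)%N.

Definition farthest_index (y : vec n) : nat := epsilon (inhabits 0%N)
  (fun j => (j < m)%N /\ forall j', (j' < m)%N -> dist_set (K j') y <= dist_set (K j) y).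
Definition nearest (C : vec n -> Prop) (y : vec n) : vec n := epsilon (inhabits y) (proj_set C y).
Definition greedy_index (X : nat -> vec n) (i : nat) : nat := farthest_index (X (i - 1)%N).
Definition greedy_proj (X : nat -> vec n) (i : nat) : vec n :=
  nearest (K (greedy_index X i)) (X (i - 1)%N).

(* shqp_hist k stores x_0, ..., x_k at indices 0..k: the window F_{k+1} defining x_{k+1}
   refers to earlier iterates, so the whole history is carried along. *)
Fixpoint shqp_hist (k : nat) : nat -> vec n :=
  if k is k'.+1 then
    let X := shqp_hist k' in
    fun i => if i == k then nearest (shqp_F pbar (fun=> tau) X (greedy_proj X) k) (X k') else X i
  else fun=> x0.
Definition shqp_seq (k : nat) : vec n := shqp_hist k k.

Lemma shqp_hist_stable i k : (i <= k)%N -> shqp_hist k i = shqp_seq i.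
Proof.
elim: k => [|k IH]; first by rewrite leqn0 => /eqP ->.
rewrite leq_eqVlt => /orP [/eqP -> //|ik] /=.
by rewrite (ltn_eqF ik) IH.
Qed.

Lemma shqp_F_hist k : shqp_F pbar (fun=> tau) (shqp_hist k) (greedy_proj (shqp_hist k)) k.+1 =
  shqp_F pbar (fun=> tau) shqp_seq (greedy_proj shqp_seq) k.+1.
Proof.
apply: functional_extensionality => y; apply: propositional_extensionality.
have same l : (l <= k.+1)%N -> shqp_hist k (l - 1)%N = shqp_seq (l - 1)%N.
  by move=> lk; apply: shqp_hist_stable; rewrite leq_subLR add1n.
by split => Fy l l1 lk; move: (Fy l l1 lk); rewrite /shqp_b /shqp_a /greedy_proj /greedy_index same.
Qed.

Lemma shqp_seq_succ k : shqp_seq k.+1 =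
  nearest (shqp_F pbar (fun=> tau) shqp_seq (greedy_proj shqp_seq) k.+1) (shqp_seq k).
Proof. by rewrite /shqp_seq /= eqxx shqp_F_hist. Qed.

Lemma shqp_seq_greedy k : greedy_at shqp_seq (greedy_proj shqp_seq) (greedy_index shqp_seq) k.
Proof.
rewrite /greedy_at /greedy_proj /greedy_index subn1 /=.
have [jm jmax] := epsilon_spec (inhabits 0%N) _
  (argmax_exists (fun j => dist_set (K j) (shqp_seq k)) m_gt0).
split => //; apply: (epsilon_spec _ (proj_set _ _)).
by apply: proj_set_exists (K_closed jm) _; exists xs; apply: K_xs.
Qed.

Lemma shqp_seq_steps k : halfspace_step shqp_seq (greedy_proj shqp_seq) k.
Proof.
suff : forall N j, (j < N)%N -> halfspace_step shqp_seq (greedy_proj shqp_seq) j.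
  by apply; apply: ltnSn.
elim=> // N IH j; rewrite ltnS leq_eqVlt => /orP [/eqP -> {j}|]; last exact: IH.
have desc := descent_of_steps (erefl (shqp_seq 0%N)) shqp_seq_greedy IH.
have [z [_ Fz]] := proj_inter_in_shqp_F (erefl (shqp_seq 0%N)) shqp_seq_greedy desc.
rewrite /halfspace_step shqp_seq_succ; apply: (epsilon_spec _ (proj_set _ _)).
by apply: proj_set_exists; [exact: shqp_F_closed | exists z].
Qed.

Lemma shqp_run_exists : exists x, shqp_run K m pbar (fun=> tau) x0 x.
Proof.
exists shqp_seq; split => //; exists (greedy_index shqp_seq), (greedy_proj shqp_seq).
move=> [|k] // _; rewrite subn1 /=; have [? ? ?] := shqp_seq_greedy k.
by split => //; apply: shqp_seq_steps.
Qed.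

Lemma shqp_run_converges x : shqp_run K m pbar (fun=> tau) x0 x ->
  exists xbar, inter K m xbar /\ V1 xbar /\ seq_cv x xbar /\
    forall i, vdist (x i.+1) xbar <= vdist (x i) xbar /\ vdist (x i) xbar <= s * beta * maxd K m (x i).
Proof.
move=> [x_0 [jb [xp run]]].
have run_succ k : greedy_at x xp jb k /\ halfspace_step x xp k.
  by have [jm jmax xp_proj x_proj] := run k.+1 erefl; rewrite subn1 in jmax xp_proj x_proj.
by apply: (run_converges (xp := xp) (jb := jb)) => // k; have [] := run_succ k.
Qed.

End SHQPAnalysis.

Theorem lemma5p2 (n m : nat) (K : nat -> vec n -> Prop) (xs : vec n)
  (beta : R) (V1 : vec n -> Prop) :
  (1 <= m)%nat ->
  (forall l, (l < m)%nat -> vclosed_set (K l)) ->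
  inter K m xs ->
  (forall l, (l < m)%nat -> super_regular (K l) xs) ->
  1 <= beta ->
  vis_neighborhood V1 xs ->
  (forall x, V1 x -> dist_set (inter K m) x <= beta * maxd K m x) ->
  forall tau : R, 0 < tau < 1 ->
  let rho := sqrt (beta ^ 2 - (1 - tau) ^ 2) / beta in
  let L := beta / (1 - rho) in
  exists U, vis_neighborhood U xs /\
    forall (x0 : vec n) (pbar : nat), U x0 -> (1 <= pbar)%nat ->
      (exists x, shqp_run K m pbar (fun _ => tau) x0 x) /\
      (forall x, shqp_run K m pbar (fun _ => tau) x0 x ->
         exists xbar, inter K m xbar /\ V1 xbar /\ seq_cv x xbar /\
           forall i : nat, vdist (x i.+1) xbar <= vdist (x i) xbar /\
                           vdist (x i) xbar <= L * maxd K m (x i)).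
Proof.
move=> m_gt0 K_closed K_xs K_sr beta1 [r1 [r1_gt0 V1_ball]] metric_ineq tau tau01 rho L.
have [rho01 rho_def] := contraction_rate_spec beta1 tau01; rewrite -/rho in rho01 rho_def.
pose s := / (1 - rho); have s_def : s * (1 - rho) = 1 by apply: Rinv_l; lra.
have s1 : 1 <= s by nra.
have L_def : L = s * beta by rewrite /L /s; field; lra.
pose delta := tau / ((1 + s) * beta + 1).
have delta_gt0 : 0 < delta by apply: Rdiv_lt_0_compat; nra.
have delta_small : delta * ((1 + s) * beta + 1) <= tau by right; rewrite /delta; field; nra.
have [rd [rd_gt0 K_sr']] := super_regular_uniform K_sr delta_gt0.
pose r0 := Rmin rd r1 / (2 + s); exists (vball xs r0); split.
  by exists r0; split => //; apply: Rdiv_lt_0_compat; [apply: Rmin_glb_lt | lra].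
move=> x0 pbar x0_near _; have [x0_rd x0_r1] := Rmin_div_lt (ltac:(lra) : 0 < 2 + s) x0_near.
have {}x0_r1 : (1 + s) * vdist x0 xs < r1 by have := vdist_ge0 x0 xs; move=> *; nra.
rewrite L_def; split => [|x].
- by apply: (@shqp_run_exists n m pbar K xs x0 V1 beta tau rho s delta r1 rd) => //; lra.
- by apply: (@shqp_run_converges n m pbar K xs x0 V1 beta tau rho s delta r1 rd) => //; lra.
Qed.
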